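(* Let $a<b$ be real numbers, let $M\colon[a,b]\to\mathbb{R}$ be non-decreasing, and let $N\colon[M(a),M(b)]\to\mathbb{R}$ be non-decreasing. Let $\Lambda=N\circ M\colon[a,b]\to\mathbb{R}$, let $\lambda$ be the measure on $[a,b]$ corresponding to $\Lambda$, and let $\nu$ be the measure on $[M(a),M(b)]$ corresponding to $N$. Let \[H=\{y\in[M(a),M(b)] : M^{-1}[\{y\}]\text{ contains more than one point}\},\] and let $\Xi\colon[M(a),M(b)]\to[a,b]$ be defined by $\Xi(y)=\sup\{x\in[a,b]: M(x)\le y\}$. Suppose that $N$ is left-continuous at $y$ for each $y\in H$ (where, by convention, $N$ is considered left-continuous at $M(a)$, with $N(M(a)-)=N(M(a))$). Then $\lambda$ is the image measure of $\nu$ under $\Xi$, i.e. $\lambda(E)=\nu(\Xi^{-1}[E])$ for every Borel set $E\subseteq[a,b]$, and for each bounded Borel function $f\colon[a,b]\to\mathbb{R}$, \[\int_a^b f(x)\,dN(M(x))=\int_{M(a)}^{M(b)} f(\Xi(y))\,dN(y).\]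
   Context: ''Non-decreasing'' is what the paper calls increasing. For a non-decreasing function $F\colon[c,d]\to\mathbb{R}$, the measure corresponding to $F$ is the unique Borel measure $\mu$ on $[c,d]$ such that for every continuous $f\colon[c,d]\to\mathbb{R}$, $\int_{[c,d]} f\,d\mu$ equals the Riemann–Stieltjes integral $\int_c^d f(x)\,dF(x)$. For a bounded Borel function $f$, the Lebesgue–Stieltjes integral $\int_c^d f(x)\,dF(x)$ is defined as $\int_{[c,d]} f\,d\mu$. The notation $\int_a^b f(x)\,dN(M(x))$ means $\int_a^b f(x)\,d\Lambda(x)$ with $\Lambda=N\circ M$. *)

From HB Require Import structures.
From mathcomp Require Import all_boot all_order all_algebra.
From mathcomp Require Import all_classical all_reals all_analysis.
Set Implicit Arguments. Unset Strict Implicit. Unset Printing Implicit Defensive.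
Import Order.TTheory GRing.Theory Num.Theory.
Import numFieldNormedType.Exports.
Local Open Scope classical_set_scope.
Local Open Scope ring_scope.

Section RS.
Variable R : realType.

Definition tagged_partition (c d : R) (s t : seq R) : Prop :=
  size s = (size t).+1 /\ head 0 s = c /\ last 0 s = d /\
  (forall i, (i < size t)%N -> nth 0 s i <= nth 0 t i <= nth 0 s i.+1).

Definition partition_mesh_lt (s : seq R) (delta : R) : Prop :=
  forall i, (i.+1 < size s)%N -> nth 0 s i.+1 - nth 0 s i < delta.

Definition RS_sum (f F : R -> R) (s t : seq R) : R :=
  \sum_(i < size t) f (nth 0 t i) * (F (nth 0 s i.+1) - F (nth 0 s i)).

Definition RS_integral_is (f F : R -> R) (c d I : R) : Prop :=
  forall eps : R, 0 < eps -> exists2 delta : R, 0 < delta &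
    forall s t, tagged_partition c d s t -> partition_mesh_lt s delta ->
      `| RS_sum f F s t - I | < eps.

(* mu (a Borel measure on R carried by [c,d], i.e. a Borel measure on [c,d])
   is the measure corresponding to F on [c,d]. *)
Definition corresponds_to (F : R -> R) (c d : R)
    (mu : {measure set R -> \bar R}) : Prop :=
  mu (~` `[c, d]) = 0%E /\
  forall f : R -> R, {within `[c, d], continuous f} ->
    exists I : R, RS_integral_is f F c d I /\
      (\int[mu]_(x in `[c, d]) (f x)%:E = I%:E)%E.

Definition Xi (M : R -> R) (a b : R) (y : R) : R :=
  sup [set x | a <= x <= b /\ M x <= y].

Definition Hset (M : R -> R) (a b : R) : set R :=
  [set y | M a <= y <= M b /\
     exists x1 x2, [/\ a <= x1 <= b, a <= x2 <= b, x1 <> x2, M x1 = y & M x2 = y]].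

End RS.

From HB Require Import structures.
From mathcomp Require Import all_boot all_order all_algebra.
From mathcomp Require Import all_classical all_reals all_analysis.
From mathcomp Require Import measurable_realfun.
From mathcomp Require Import lra.
Import Order.TTheory GRing.Theory Num.Theory.
Import numFieldNormedType.Exports.
Local Open Scope classical_set_scope.
Local Open Scope ring_scope.
Set Implicit Arguments. Unset Strict Implicit. Unset Printing Implicit Defensive.

(* Let lam' be the image of nu under a nondecreasing (hence Borel) extension of
   Xi.  Both lam and lam' are finite measures carried by [a, b], so by uniqueness
   of measures agreeing on rays it suffices to show, for a <= x < b,
     lam [a, x] = nu {y in [M a, M b] | Xi y <= x}.
   Testing the Riemann-Stieltjes identity against ramp functions shows that a
   measure mu corresponding to a nondecreasing F satisfies
   F x - F c <= mu [c, x] <= F z - F c for x < z, and mu [c, m[ <= F m - F c.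
   Hence both sides above are lower bounds of the values Lambda x' - Lambda a,
   x < x' <= b, and both can be approximated by such values: for lam by
   continuity of measures from above, for nu by considering m = inf M (]x, b]).
   If m is attained, M is constant on an interval to its left, so m lies in H
   and the left-continuity of N at m is exactly what is needed.  The integral
   formula is then the change of variables for image measures. *)


Section uniform_partition.
Variable R : realType.
Implicit Types (c d eps eta : R) (f F : R -> R).

Definition unif_pt c d n i : R := c + i%:R * ((d - c) / n%:R).

Definition unif_sum f F c d n : R :=
  \sum_(i < n) f (unif_pt c d n i) * (F (unif_pt c d n i.+1) - F (unif_pt c d n i)).

Lemma unif_pt0 c d n : unif_pt c d n 0 = c.
Proof. by rewrite /unif_pt mul0r addr0. Qed.

Lemma unif_ptn c d n : (0 < n)%N -> unif_pt c d n n = d.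
Proof. by move=> n0; rewrite /unif_pt mulrCA divff ?pnatr_eq0 -?lt0n // mulr1 addrC subrK. Qed.

Lemma unif_ptS c d n i : unif_pt c d n i.+1 = unif_pt c d n i + (d - c) / n%:R.
Proof. by rewrite /unif_pt -natr1 mulrDl mul1r addrA. Qed.

Lemma unif_pt_le c d n i j : c <= d -> (i <= j)%N -> unif_pt c d n i <= unif_pt c d n j.
Proof. by move=> cd ij; rewrite lerD2l ler_wpM2r ?ler_nat ?divr_ge0 ?subr_ge0. Qed.

Lemma unif_pt_itv c d n i : c <= d -> (0 < n)%N -> (i <= n)%N ->
  c <= unif_pt c d n i <= d.
Proof.
move=> cd n0 le; apply/andP; split.
  by rewrite -{1}(unif_pt0 c d n) unif_pt_le.
by rewrite -{2}(unif_ptn c d n0) unif_pt_le.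
Qed.

Lemma tagged_partition_unif c d n : c <= d -> (0 < n)%N ->
  tagged_partition c d (mkseq (unif_pt c d n) n.+1) (mkseq (unif_pt c d n) n).
Proof.
move=> cd n0; split; first by rewrite !size_mkseq.
split; first by rewrite /= unif_pt0.
split; first by rewrite (last_nth 0) size_mkseq /= nth_mkseq // unif_ptn.
move=> i; rewrite size_mkseq => ilt.
by rewrite !nth_mkseq ?ltnS ?(ltnW ilt) // lexx unif_pt_le.
Qed.

Lemma partition_mesh_unif c d n eta : (d - c) / n%:R < eta ->
  partition_mesh_lt (mkseq (unif_pt c d n) n.+1) eta.
Proof.
move=> h i; rewrite size_mkseq => ilt.
by rewrite !nth_mkseq ?(ltnW ilt) // unif_ptS addrAC subrr add0r.
Qed.

Lemma RS_sum_unif f F c d n :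
  RS_sum f F (mkseq (unif_pt c d n) n.+1) (mkseq (unif_pt c d n) n) =
  unif_sum f F c d n.
Proof.
rewrite /RS_sum size_mkseq; apply: eq_bigr => i _.
by rewrite !nth_mkseq ?ltnS // ltnW.
Qed.

Lemma exists_unif_step_lt c d eta : 0 < eta ->
  exists2 n, (0 < n)%N & (d - c) / n%:R < eta.
Proof.
move=> eta0; exists (Num.truncn (`|d - c| / eta)).+1 => //.
rewrite ltr_pdivrMr ?ltr0n // (le_lt_trans (ler_norm _)) // -ltr_pdivrMl //.
by rewrite mulrC truncnS_gt.
Qed.

Lemma RS_integral_unif_approx f F c d I eps eta : c <= d -> 0 < eps -> 0 < eta ->
  RS_integral_is f F c d I ->
  exists n, [/\ (0 < n)%N, (d - c) / n%:R < eta & `|unif_sum f F c d n - I| < eps].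
Proof.
move=> cd eps0 eta0 /(_ eps eps0) [delta delta0 RSI].
have min_gt0 : 0 < Num.min delta eta by rewrite lt_min delta0 eta0.
have [n n0] := exists_unif_step_lt c d min_gt0.
rewrite lt_min => /andP[n_delta n_eta]; exists n; split => //.
rewrite -RS_sum_unif; apply: RSI; first exact: tagged_partition_unif.
exact: partition_mesh_unif.
Qed.

Lemma RS_integral_le f F c d I B eta : c <= d -> 0 < eta -> RS_integral_is f F c d I ->
  (forall n, (0 < n)%N -> (d - c) / n%:R < eta -> unif_sum f F c d n <= B) ->
  I <= B.
Proof.
move=> cd eta0 RSI hB; apply/ler_addgt0Pr => e e0.
have [n [n0 n_eta]] := RS_integral_unif_approx cd e0 eta0 RSI.
rewrite ltr_norml => /andP[h _]; have := hB n n0 n_eta; lra.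
Qed.

Lemma RS_integral_ge f F c d I B eta : c <= d -> 0 < eta -> RS_integral_is f F c d I ->
  (forall n, (0 < n)%N -> (d - c) / n%:R < eta -> B <= unif_sum f F c d n) ->
  B <= I.
Proof.
move=> cd eta0 RSI hB; apply/ler_addgt0Pr => e e0.
have [n [n0 n_eta]] := RS_integral_unif_approx cd e0 eta0 RSI.
rewrite ltr_norml => /andP[_ h]; have := hB n n0 n_eta; lra.
Qed.

Lemma unif_sum_cst1 F c d n : (0 < n)%N -> unif_sum (fun=> 1) F c d n = F d - F c.
Proof.
move=> n0; rewrite /unif_sum; under eq_bigr do rewrite mul1r.
have := telescope_sumr (fun i => F (unif_pt c d n i)) (leq0n n).
by rewrite big_mkord unif_ptn // unif_pt0.
Qed.

Lemma RS_integral_cst1 F c d I : c <= d -> RS_integral_is (fun=> 1) F c d I ->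
  I = F d - F c.
Proof.
move=> cd RSI; apply/le_anti/andP; split.
  by apply: (RS_integral_le cd ltr01 RSI) => n n0 _; rewrite unif_sum_cst1.
by apply: (RS_integral_ge cd ltr01 RSI) => n n0 _; rewrite unif_sum_cst1.
Qed.

End uniform_partition.

Section RS_bounds.
Variable R : realType.
Implicit Types (c d x y z I : R) (g F : R -> R).

Lemma homo_in_itv F c d : {in `[c, d] &, {homo F : x y / x <= y}} ->
  forall x y, c <= x -> x <= y -> y <= d -> F x <= F y.
Proof.
move=> hF x y cx xy yd; apply: hF => //; rewrite in_itv /=.
  by rewrite cx (le_trans xy yd).
by rewrite yd (le_trans cx xy).
Qed.

Lemma unif_telescope_min F c d x n : c <= x -> x <= d -> (0 < n)%N ->
  F x - F c = \sum_(i < n)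
    (F (Num.min (unif_pt c d n i.+1) x) - F (Num.min (unif_pt c d n i) x)).
Proof.
move=> cx xd n0.
have := telescope_sumr (fun i => F (Num.min (unif_pt c d n i) x)) (leq0n n).
by rewrite big_mkord unif_ptn // unif_pt0 (min_r xd) (min_l cx).
Qed.

Lemma RS_integral_ge_ramp g F c d x I : c <= x -> x <= d ->
  {in `[c, d] &, {homo F : x y / x <= y}} ->
  (forall u, c <= u <= d -> 0 <= g u) -> (forall u, c <= u <= x -> g u = 1) ->
  RS_integral_is g F c d I -> F x - F c <= I.
Proof.
move=> cx xd hF g0 g1 RSI; have cd := le_trans cx xd; have mF := homo_in_itv hF.
apply: (RS_integral_ge cd ltr01 RSI) => n n0 _.
rewrite (unif_telescope_min F cx xd n0); apply: ler_sum => i _.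
set p := unif_pt c d n.
have /andP[ci id] : c <= p i <= d by apply: unif_pt_itv => //; exact: ltnW.
have /andP[ci1 id1] : c <= p i.+1 <= d by exact: unif_pt_itv.
have pii1 : p i <= p i.+1 by apply: unif_pt_le.
have [xi|ix] := leP x (p i).
  rewrite (min_r (le_trans xi pii1)) subrr mulr_ge0 ?g0 ?ci //.
  by rewrite subr_ge0 mF.
rewrite g1 ?ci ?(ltW ix) // mul1r lerD2r.
by have [//|xi1] := leP (p i.+1) x; apply: mF => //; exact: ltW.
Qed.

Lemma RS_integral_le_ramp g F c d y z I : c <= y -> y < z -> z <= d ->
  {in `[c, d] &, {homo F : x y / x <= y}} ->
  (forall u, c <= u <= d -> g u <= 1) -> (forall u, y <= u <= d -> g u = 0) ->
  RS_integral_is g F c d I -> I <= F z - F c.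
Proof.
move=> cy yz zd hF g1 g0 RSI; have cz := le_trans cy (ltW yz).
have cd := le_trans cz zd; have mF := homo_in_itv hF.
have zy0 : 0 < z - y by rewrite subr_gt0.
apply: (RS_integral_le cd zy0 RSI) => n n0 step_lt.
rewrite (unif_telescope_min F cz zd n0); apply: ler_sum => i _.
set p := unif_pt c d n.
have /andP[ci id] : c <= p i <= d by apply: unif_pt_itv => //; exact: ltnW.
have /andP[ci1 id1] : c <= p i.+1 <= d by exact: unif_pt_itv.
have pii1 : p i <= p i.+1 by apply: unif_pt_le.
have mono_min : F (Num.min (p i) z) <= F (Num.min (p i.+1) z).
  apply: mF; [by rewrite le_min ci cz | exact: le_min2 | by rewrite ge_min id1].
have [yi|iy] := leP y (p i).
  by rewrite g0 ?yi ?id // mul0r subr_ge0.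
have i1z : p i.+1 <= z.
  by have : p i.+1 = p i + (d - c) / n%:R := unif_ptS c d n i; lra.
rewrite (min_l i1z) (min_l (le_trans pii1 i1z)) ler_piMl ?g1 ?ci ?id //.
by rewrite subr_ge0 mF.
Qed.

End RS_bounds.

Section ramp.
Variable R : realType.
Implicit Types (x h u : R).

Definition ramp x h : R -> R :=
  (cst 1) \min ((cst 0) \max (fun u => (x + h - u) / h)).

Lemma ramp_continuous x h : continuous (ramp x h).
Proof.
apply: min_fun_continuous; first exact: cst_continuous.
apply: max_fun_continuous; first exact: cst_continuous.
move=> u; apply: (@continuousM R R (fun u => x + h - u) (cst h^-1) u).
  apply: (@continuousB R R^o R (cst (x + h)) id u); first exact: cvg_cst.
  exact: cvg_id.
exact: cvg_cst.
Qed.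

Lemma ramp_ge0 x h u : 0 <= ramp x h u.
Proof. by rewrite /ramp /= le_min ler01 le_max lexx. Qed.

Lemma ramp_le1 x h u : ramp x h u <= 1.
Proof. by rewrite /ramp /= ge_min lexx. Qed.

Lemma ramp1 x h u : 0 < h -> u <= x -> ramp x h u = 1.
Proof.
move=> h0 ux; rewrite /ramp /=; apply/min_idPl.
by rewrite le_max ler_pdivlMr // mul1r; apply/orP; right; lra.
Qed.

Lemma ramp0 x h u : 0 < h -> x + h <= u -> ramp x h u = 0.
Proof.
move=> h0 ux; rewrite /ramp /=.
have -> : Num.max 0 ((x + h - u) / h) = 0.
  by apply/max_idPl; rewrite pmulr_lle0 ?invr_gt0 //; lra.
exact/min_idPr/ler01.
Qed.

End ramp.

Section measure_vs_integral.
Variables (R : realType) (mu : {measure set R -> \bar R}).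
Local Open Scope ereal_scope.

Let measurable_cont (D : set R) (g : R -> R) : continuous g ->
  measurable_fun D (EFin \o g).
Proof.
move=> gc; apply/measurable_EFinP; apply: measurable_funTS.
exact: continuous_measurable_fun.
Qed.

Lemma measure_le_integral (D A : set R) (g : R -> R) :
  measurable D -> measurable A -> continuous g ->
  (forall u, D u -> (0 <= g u)%R) -> (forall u, D u -> A u -> g u = 1%R) ->
  mu (A `&` D) <= \int[mu]_(u in D) (g u)%:E.
Proof.
move=> mD mA gc g0 g1; rewrite -integral_indic //.
apply: ge0_le_integral => //; first by apply: measurableT_comp => //; exact: measurable_indic.
  exact: measurable_cont.
move=> u Du; rewrite lee_fin indicE.
by case: (boolP (u \in A)) => [/set_mem Au|_]; [rewrite g1 | exact: g0].
Qed.

Lemma integral_le_measure (D B : set R) (g : R -> R) :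
  measurable D -> measurable B -> continuous g ->
  (forall u, D u -> (0 <= g u)%R) -> (forall u, D u -> (g u <= 1)%R) ->
  (forall u, D u -> ~ B u -> g u = 0%R) ->
  \int[mu]_(u in D) (g u)%:E <= mu (B `&` D).
Proof.
move=> mD mB gc g0 g1 gB; rewrite -integral_indic //.
apply: ge0_le_integral => //.
- exact: measurable_cont.
- by apply: measurableT_comp => //; exact: measurable_indic.
move=> u Du; rewrite lee_fin indicE.
case: (boolP (u \in B)) => [_|/negP uB]; first exact: g1.
by rewrite gB // => /mem_set.
Qed.

End measure_vs_integral.

Lemma cvge_approx_le (R : realType) (u : (\bar R)^nat) (l : \bar R) (e : R) :
  l \is a fin_num -> u @ \oo --> l -> 0 < e -> exists n, (u n <= l + e%:E)%E.
Proof.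
move=> l_fin ul e0; apply/not_existsP => u_gt.
have : (l + e%:E <= lim (u @ \oo))%E.
  apply: lime_ge; first exact: cvgP ul.
  by apply: nearW => n; apply/ltW; rewrite ltNge; apply/negP; exact: u_gt.
rewrite (cvg_lim _ ul) //; move: l_fin; case: (l) => // r _.
by rewrite -EFinD lee_fin; lra.
Qed.

Section measure_itv_limits.
Variables (R : realType) (mu : {measure set R -> \bar R}).

Lemma measure_cc_right_approx (c x d e : R) : x < d -> (mu `[c, d]%classic < +oo)%E ->
  0 < e -> exists2 w, x < w <= d & (mu `[c, w]%classic <= mu `[c, x]%classic + e%:E)%E.
Proof.
move=> xd mu_fin e0; have dx0 : 0 < d - x by rewrite subr_gt0.
pose t n := (d - x) / n.+1%:R.
have t_gt0 n : 0 < t n by rewrite divr_gt0 ?ltr0n.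
have t_le n : t n <= d - x by rewrite ler_pdivrMr ?ltr0n // ler_pMr // ler1n.
pose A n := `[c, x + t n]%classic.
have A_sub_cd n : A n `<=` `[c, d]%classic.
  by move=> u; rewrite /A /= !in_itv /= => /andP[-> /le_trans]; apply; rewrite -lerBrDl.
have A_decr : nonincreasing_seq A.
  move=> n m nm; apply/subsetPset => u; rewrite /A /= !in_itv /= => /andP[-> um] /=.
  apply: le_trans um _; rewrite lerD2l ler_pM2l // lef_pV2 ?posrE ?ltr0n //.
  by rewrite ler_nat ltnS.
have capA : \bigcap_n A n = `[c, x]%classic.
  apply/seteqP; split => u /=; last first.
    rewrite in_itv /= => /andP[cu ux] n _.
    by rewrite /A /= in_itv /= cu (le_trans ux) // lerDl ltW.
  move=> Au; have := Au 0%N Logic.I; rewrite /A /= !in_itv /= => /andP[-> _] /=.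
  rewrite leNgt; apply/negP => xu; have ux0 : 0 < u - x by rewrite subr_gt0.
  have [k k0 tk] := exists_unif_step_lt x d ux0.
  have := Au k.-1 Logic.I; rewrite /A /t /= in_itv /= prednK // => /andP[_].
  by move: tk; lra.
have mA n : measurable (A n) := measurable_itv _.
have cvA : mu \o A @ \oo --> mu `[c, x]%classic.
  rewrite -capA; apply: nonincreasing_cvg_mu => //; last by rewrite capA.
  by apply: (le_lt_trans _ mu_fin); apply: le_measure; rewrite ?inE.
have l_fin : mu `[c, x]%classic \is a fin_num.
  rewrite ge0_fin_numE // (le_lt_trans _ mu_fin) // -capA.
  apply: le_measure; rewrite ?inE //; first by rewrite capA.
  by move=> u /(_ 0%N Logic.I); apply: A_sub_cd.
have [n An] := cvge_approx_le l_fin cvA e0.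
by exists (x + t n) => //; rewrite ltrDl t_gt0 -lerBrDl t_le.
Qed.

Lemma measure_co_le (c m : R) (B : \bar R) : c < m ->
  (forall y, c <= y < m -> (mu `[c, y]%classic <= B)%E) -> (mu `[c, m[%classic <= B)%E.
Proof.
move=> cm hB; have mc0 : 0 < m - c by rewrite subr_gt0.
pose t n := (m - c) / n.+2%:R.
have t_gt0 n : 0 < t n by rewrite divr_gt0 ?ltr0n.
have t_lt n : t n < m - c by rewrite ltr_pdivrMr ?ltr0n // ltr_pMr // ltr1n.
pose A n := `[c, m - t n]%classic.
have A_incr : nondecreasing_seq A.
  move=> n k nk; apply/subsetPset => u; rewrite /A /= !in_itv /= => /andP[-> uk] /=.
  apply: le_trans uk _; rewrite lerD2l lerN2 ler_pM2l // lef_pV2 ?posrE ?ltr0n //.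
  by rewrite ler_nat !ltnS.
have cupA : \bigcup_n A n = `[c, m[%classic.
  apply/seteqP; split => u /=.
    move=> [n _]; rewrite /A /= !in_itv /= => /andP[-> um] /=.
    by apply: le_lt_trans um _; rewrite ltrBlDr ltrDl.
  rewrite in_itv /= => /andP[cu um]; have mu0 : 0 < m - u by rewrite subr_gt0.
  have [k k0 tk] := exists_unif_step_lt c m mu0.
  exists k => //; rewrite /A /t /= in_itv /= cu /=.
  have : (m - c) / k.+2%:R <= (m - c) / k%:R.
    by rewrite ler_pM2l // lef_pV2 ?posrE ?ltr0n // ler_nat -addn2 leq_addr.
  by move: tk; set s := _ / k.+2%:R; set s' := _ / k%:R; lra.
have cvA : mu \o A @ \oo --> mu `[c, m[%classic.
  have mA n : measurable (A n) := measurable_itv _.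
  by rewrite -cupA; apply: nondecreasing_cvg_mu => //; rewrite cupA.
rewrite -(cvg_lim _ cvA) //; apply: lime_le; first exact: cvgP cvA.
by apply: nearW => n; apply: hB; move: (t_gt0 n) (t_lt n); lra.
Qed.

End measure_itv_limits.

Section corresponding_measure.
Variables (R : realType) (F : R -> R) (c d : R) (mu : {measure set R -> \bar R}).
Hypotheses (cd : c <= d) (hF : {in `[c, d] &, {homo F : x y / x <= y}})
  (hmu : corresponds_to F c d mu).
Local Open Scope ereal_scope.

Let integral_continuous (g : R -> R) : continuous g ->
  exists I, RS_integral_is g F c d I /\ \int[mu]_(x in `[c, d]) (g x)%:E = I%:E.
Proof. by move=> gc; apply: hmu.2; exact: continuous_subspaceT. Qed.

Lemma corresponds_itv : mu `[c, d]%classic = (F d - F c)%:E.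
Proof.
have [I [RSI hI]] := integral_continuous (@cst_continuous _ R 1%R).
by rewrite -(RS_integral_cst1 cd RSI) -hI integral_cst //= mul1e.
Qed.

Lemma corresponds_lty A : measurable A -> mu A < +oo.
Proof.
move=> mA; apply: (@le_lt_trans _ _ (mu setT)); first by apply: le_measure; rewrite ?inE.
have mI : measurable `[c, d]%classic := measurable_itv _.
rewrite -(setUv `[c, d]%classic) measureU //; last exact: setICr.
  by move: corresponds_itv hmu.1 => /= -> ->; rewrite adde0 ltry.
exact: measurableC.
Qed.

Lemma corresponds_cc_le x z : (c <= x)%R -> (x < z)%R -> (z <= d)%R ->
  mu `[c, x]%classic <= (F z - F c)%:E.
Proof.
move=> cx xz zd; pose h := ((z - x) / 2)%R.
have h0 : (0 < h)%R by rewrite divr_gt0 // subr_gt0.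
have [I [RSI hI]] := integral_continuous (@ramp_continuous R x h).
have -> : `[c, x]%classic = `[c, x]%classic `&` `[c, d]%classic.
  apply/esym/setIidl => u /=; rewrite !in_itv /= => /andP[-> ux] /=.
  by apply: le_trans zd; apply: le_trans (ltW xz).
apply: le_trans (_ : _ <= \int[mu]_(u in `[c, d]%classic) (ramp x h u)%:E) _.
  apply: measure_le_integral; rewrite ?measurable_itv //.
  - exact: ramp_continuous.
  - by move=> u _; exact: ramp_ge0.
  - by move=> u _; rewrite /= in_itv /= => /andP[_ ux]; apply: ramp1.
rewrite hI lee_fin; apply: (RS_integral_le_ramp (y := (x + h)%R)) RSI => //.
- by rewrite (le_trans cx) // lerDl ltW.
- by rewrite /h; lra.
- by move=> u _; exact: ramp_le1.
- by move=> u /andP[xu _]; apply: ramp0.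
Qed.

Lemma corresponds_cc_ge_lt x w : (c <= x)%R -> (x < w)%R -> (w <= d)%R ->
  (F x - F c)%:E <= mu `[c, w]%classic.
Proof.
move=> cx xw wd; pose h := (w - x)%R.
have h0 : (0 < h)%R by rewrite subr_gt0.
have [I [RSI hI]] := integral_continuous (@ramp_continuous R x h).
have -> : `[c, w]%classic = `[c, w]%classic `&` `[c, d]%classic.
  apply/esym/setIidl => u /=; rewrite !in_itv /= => /andP[-> uw] /=.
  exact: le_trans wd.
apply: le_trans (_ : _ <= \int[mu]_(u in `[c, d]%classic) (ramp x h u)%:E) _.
  rewrite hI lee_fin; apply: (RS_integral_ge_ramp (x := x)) RSI => //.
  - by apply: le_trans wd; exact: ltW.
  - by move=> u _; exact: ramp_ge0.
  - by move=> u /andP[_ ux]; apply: ramp1.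
apply: integral_le_measure; rewrite ?measurable_itv //.
- exact: ramp_continuous.
- by move=> u _; exact: ramp_ge0.
- by move=> u _; exact: ramp_le1.
move=> u; rewrite /= !in_itv /= => /andP[cu ud] nw; apply: ramp0 => //.
rewrite /h addrC subrK; apply: ltW; rewrite ltNge; apply/negP => uw.
by apply: nw; rewrite cu uw.
Qed.

Lemma corresponds_right_approx x e : (c <= x)%R -> (x < d)%R -> (0 < e)%R ->
  exists2 z, (x < z <= d)%R & (F z - F c)%:E <= mu `[c, x]%classic + e%:E.
Proof.
move=> cx xd e0.
have mu_cd_fin := corresponds_lty (measurable_itv `[c, d]).
have [w /andP[xw wd] hw] := measure_cc_right_approx xd mu_cd_fin e0.
exists ((x + w) / 2)%R; first by apply/andP; split; lra.
by apply: le_trans hw; apply: corresponds_cc_ge_lt; lra.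
Qed.

Lemma corresponds_cc_ge x : (c <= x)%R -> (x <= d)%R ->
  (F x - F c)%:E <= mu `[c, x]%classic.
Proof.
move=> cx xd; have [xd'|dx] := ltP x d; last first.
  have -> : x = d by apply/le_anti; rewrite xd dx.
  by rewrite corresponds_itv.
apply/lee_addgt0Pr => e e0; have [z /andP[xz zd] h] := corresponds_right_approx cx xd' e0.
apply: le_trans h; rewrite lee_fin lerD2r; apply: (homo_in_itv hF) => //; exact: ltW.
Qed.

Lemma corresponds_co_le m : (c <= m)%R -> (m <= d)%R ->
  mu `[c, m[%classic <= (F m - F c)%:E.
Proof.
move=> cm md; have [cm'|mc] := ltP c m.
  by apply: measure_co_le => // y /andP[cy ym]; apply: corresponds_cc_le.
have -> : m = c by apply/le_anti; rewrite cm mc.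
by rewrite set_itvco0 measure0 subrr.
Qed.

End corresponding_measure.

Section Xi.
Variables (R : realType) (M : R -> R) (a b : R).
Hypothesis ab : a <= b.

Let S y := [set x | a <= x <= b /\ M x <= y].

Let S_neq0 y : M a <= y -> S y !=set0.
Proof. by move=> ay; exists a; split; rewrite ?lexx ?ab. Qed.

Let S_ub y : has_ubound (S y).
Proof. by exists b => x [/andP[_ ->]]. Qed.

Lemma Xi_itv y : M a <= y -> a <= Xi M a b y <= b.
Proof.
move=> ay; apply/andP; split; first by apply: (ub_le_sup (S_ub y)); split; rewrite ?lexx ?ab.
by apply: ge_sup; [exact: S_neq0 | move=> x [/andP[_ ->]]].
Qed.

Lemma Xi_leP y x : M a <= y ->
  Xi M a b y <= x <-> forall x', a <= x' <= b -> x < x' -> y < M x'.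
Proof.
move=> ay; split=> [Xix x' x'ab xx'|h].
  rewrite ltNge; apply/negP => Mx'; have : x' <= Xi M a b y by exact: (ub_le_sup (S_ub y)).
  by rewrite leNgt (le_lt_trans Xix xx').
apply: ge_sup; first exact: S_neq0.
by move=> s [sab Ms]; rewrite leNgt; apply/negP => /(h s sab); rewrite ltNge Ms.
Qed.

(* Extending [Xi M a b] monotonically to all of [R] makes it Borel measurable. *)
Definition Xi_ext y := if y < M a then a else Xi M a b y.

Lemma Xi_extE y : M a <= y -> Xi_ext y = Xi M a b y.
Proof. by rewrite /Xi_ext ltNge => ->. Qed.

Lemma Xi_ext_itv y : a <= Xi_ext y <= b.
Proof. by rewrite /Xi_ext; case: ltP => [_|/Xi_itv //]; rewrite lexx ab. Qed.

Lemma Xi_ext_nondecreasing : {homo Xi_ext : x y / x <= y}.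
Proof.
move=> y1 y2 y12; rewrite /Xi_ext; case: (ltP y1 (M a)) => h1.
  by case: ltP => h2 //; have /andP[] := Xi_itv h2.
have h2 := le_trans h1 y12; rewrite ltNge h2 /=.
apply: sup_le; [|exact: S_neq0 h1 | split; [exact: S_neq0 h2 | exact: S_ub]].
by move=> s [sab Ms]; exists s; split => //; split => //; exact: le_trans Ms y12.
Qed.

End Xi.

Lemma cvg_at_left_approx (R : realType) (f : R -> R) (c m e : R) :
  f x @[x --> m^'-] --> f m -> c < m -> 0 < e ->
  exists2 y, c < y < m & f m < f y + e.
Proof.
move=> fm cm e0; near (m^'-) => y.
exists y; first by apply/andP; split; near: y; [exact: nbhs_left_gt | exact: nbhs_left_lt].
rewrite -ltrBlDl; apply: le_lt_trans (ler_norm _) _; near: y.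
by apply: cvgr_dist_lt.
Unshelve. all: by end_near.
Qed.

Section measure_facts.
Variable R : realType.
Local Open Scope ereal_scope.

Lemma measure_setI_conull (mu : {measure set R -> \bar R}) (D A : set R) :
  measurable D -> measurable A -> mu (~` D) = 0 -> mu A = mu (A `&` D).
Proof.
move=> mD mA h0; have mC : measurable (~` D) by exact: measurableC.
have -> : mu A = mu (A `&` D) + mu (A `&` ~` D).
  rewrite -measureU; try exact: measurableI.
  - by rewrite -setIUr setUv setIT.
  - by rewrite setIACA setICr setI0.
suff -> : mu (A `&` ~` D) = 0 by rewrite adde0.
apply/le_anti; rewrite measure_ge0 andbT -h0.
by apply: le_measure; rewrite ?inE //; exact: measurableI.
Qed.

Lemma eq_approx_lower_bounds (u v : \bar R) (Phi : R -> \bar R) (P : R -> Prop) :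
  (forall x, P x -> u <= Phi x) -> (forall x, P x -> v <= Phi x) ->
  (forall e : R, (0 < e)%R -> exists2 x, P x & Phi x <= u + e%:E) ->
  (forall e : R, (0 < e)%R -> exists2 x, P x & Phi x <= v + e%:E) -> u = v.
Proof.
move=> hu hv au av; apply/le_anti/andP; split; apply/lee_addgt0Pr => e e0.
  by have [x Px h] := av e e0; exact: le_trans (hu x Px) h.
by have [x Px h] := au e e0; exact: le_trans (hv x Px) h.
Qed.

Lemma eq_measure_rays (mu1 mu2 : {measure set R -> \bar R}) :
  (forall x, mu1 `]-oo, x]%classic < +oo) ->
  (forall x, mu1 `]-oo, x]%classic = mu2 `]-oo, x]%classic) ->
  forall A, measurable A -> mu1 A = mu2 A.
Proof.
move=> mu1_fin eq12 A mA.
have mu2_fin x : mu2 `]-oo, x]%classic < +oo by rewrite -eq12.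
apply: (@measure_unique _ R R (@ocitv R) (fun n => `](- n%:R)%R, (n%:R)%R]%classic)) => //.
- exact: ocitvI.
- by move=> n; exact: is_ocitv.
- apply/seteqP; split => u // _; exists (Num.truncn `|u|).+1 => //; rewrite /= in_itv /=.
  have := truncnS_gt `|u|; have := ler_norm u; have := ler_norm (- u); rewrite normrN.
  by move=> *; apply/andP; split; lra.
- move=> _ /ocitvP[->|[[x1 x2] /= x12 ->]]; first by rewrite !measure0.
  have -> : `]x1, x2]%classic = `]-oo, x2]%classic `\` `]-oo, x1]%classic.
    apply/seteqP; split => u /=; rewrite !in_itv /=.
      by move=> /andP[x1u ux2]; split => //; apply/negP; rewrite -ltNge.
    by move=> [ux2 /negP]; rewrite -ltNge => ->.
  have m1 : measurable `]-oo, x1]%classic := measurable_itv _.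
  have m2 : measurable `]-oo, x2]%classic := measurable_itv _.
  rewrite (measureD m2 m1 (mu1_fin x2)) (measureD m2 m1 (mu2_fin x2)).
  have -> : `]-oo, x2]%classic `&` `]-oo, x1]%classic = `]-oo, x1]%classic.
    by apply/setIidr => u /=; rewrite !in_itv /= => /le_trans; apply; exact: ltW.
  by congr (_ - _); exact: eq12.
- move=> n; apply: le_lt_trans (mu1_fin n%:R); apply: le_measure; rewrite ?inE //.
  by apply: subitvPl; rewrite bnd_simp.
Qed.

End measure_facts.

Section main.
Variables (R : realType) (a b : R) (M N : R -> R) (lam nu : {measure set R -> \bar R}).
Hypotheses (ab : a < b)
  (hM : {in `[a, b] &, {homo M : x y / x <= y}})
  (hN : {in `[M a, M b] &, {homo N : x y / x <= y}})
  (hlam : corresponds_to (N \o M) a b lam)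
  (hnu : corresponds_to N (M a) (M b) nu)
  (hH : forall y, Hset M a b y -> y = M a \/ N x @[x --> y^'-] --> N y).

Let ab' : a <= b := ltW ab.
Let mM := homo_in_itv hM.
Let mN := homo_in_itv hN.
Let MaMb : M a <= M b := mM (lexx a) ab' (lexx b).

Let M_itv x : a <= x -> x <= b -> M a <= M x <= M b.
Proof. by move=> ax xb; rewrite !mM ?lexx. Qed.

Let hNM : {in `[a, b] &, {homo (N \o M) : x y / x <= y}}.
Proof.
move=> x y; rewrite !in_itv /= => /andP[ax xb] /andP[ay yb] xy.
have /andP[Mx _] := M_itv ax xb; have /andP[_ My] := M_itv ay yb.
by apply: mN => //; apply: mM.
Qed.

Let Xi_m : {mfun R >-> R} := HB.pack (Xi_ext M a b) (isMeasurableFun.Build _ _ _ _ _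
  (nondecreasing_measurable measurableT (Xi_ext_nondecreasing M ab'))).

Let measurable_Xi_preimage A : measurable A -> measurable (Xi_m @^-1` A).
Proof. by move=> mA; rewrite -[_ @^-1` _]setTI; exact: measurable_funP. Qed.

Let sublevel x := Xi_m @^-1` `]-oo, x]%classic `&` `[M a, M b]%classic.

Let measurable_sublevel x : measurable (sublevel x).
Proof. by apply: measurableI; [exact: measurable_Xi_preimage | exact: measurable_itv]. Qed.

Let sublevelP x y : sublevel x y <->
  M a <= y <= M b /\ forall x', a <= x' <= b -> x < x' -> y < M x'.
Proof.
rewrite /sublevel /= !in_itv /=; split => [[Xix yI]|[yI h]].
  by split => //; apply/(Xi_leP ab' x (andP yI).1); rewrite -Xi_extE //; case/andP: yI.
by split => //; rewrite /= Xi_extE; [apply/(Xi_leP ab' x (andP yI).1) | case/andP: yI].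
Qed.

Let cc_sub_sublevel x y : M a <= y -> y <= M b ->
  (forall x', x < x' <= b -> y < M x') -> `[M a, y]%classic `<=` sublevel x.
Proof.
move=> ay yMb h u; rewrite /= in_itv /= => /andP[au uy]; apply/sublevelP.
split; first by rewrite au (le_trans uy yMb).
by move=> x' /andP[_ x'b] xx'; apply: le_lt_trans uy (h x' _); rewrite xx'.
Qed.

Local Open Scope ereal_scope.

Let nu_sublevel_le x x' : (a <= x)%R -> (x < x' <= b)%R ->
  nu (sublevel x) <= (N (M x') - N (M a))%:E.
Proof.
move=> ax /andP[xx' x'b]; have ax' := le_trans ax (ltW xx').
have /andP[Ma Mb] := M_itv ax' x'b.
apply: le_trans (corresponds_co_le hN hnu Ma Mb); apply: le_measure; rewrite ?inE //=.
move=> y /sublevelP[/andP[ay _] h]; rewrite /= in_itv /= ay.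
by apply: h => //; rewrite ax'.
Qed.

(* [M] is constant on [[(x + x1) / 2, x1]], so [M x1] lies in [H]. *)
Let sublevel_approx_attained x x1 e : (a <= x)%R -> (x < x1 <= b)%R ->
  (forall x', (x < x' <= b)%R -> (M x1 <= M x')%R) -> (0 < e)%R ->
  (N (M x1) - N (M a))%:E <= nu (sublevel x) + e%:E.
Proof.
move=> ax /andP[xx1 x1b] x1_min e0; have ax1 := le_trans ax (ltW xx1).
have /andP[Max1 Mx1b] := M_itv ax1 x1b.
have [Ma_eq|Ma_neq] := eqVneq (M x1) (M a).
  by rewrite Ma_eq subrr adde_ge0 // lee_fin ltW.
have Ma_lt : (M a < M x1)%R by rewrite lt_neqAle eq_sym Ma_neq Max1.
pose x2 := ((x + x1) / 2)%R.
have [xx2 x2x1] : (x < x2 /\ x2 < x1)%R by rewrite /x2; split; lra.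
have Mx2 : M x2 = M x1.
  apply/le_anti; rewrite x1_min ?xx2 ?(le_trans (ltW x2x1)) // andbT.
  by apply: mM => //; [exact: le_trans ax (ltW xx2) | exact: ltW].
have hH_x1 : Hset M a b (M x1).
  split; first by rewrite Max1 Mx1b.
  exists x1, x2; split => //; first by rewrite ax1.
  - by apply/andP; split; [exact: le_trans ax (ltW xx2) | exact: le_trans (ltW x2x1) x1b].
  - by move=> x12; move: x2x1; rewrite x12 ltxx.
have [Ma_eq|N_left_cont] := hH hH_x1; first by move: Ma_lt; rewrite Ma_eq ltxx.
have [y /andP[May yMx1] Ny] := cvg_at_left_approx N_left_cont Ma_lt e0.
have yMb : (y <= M b)%R := le_trans (ltW yMx1) Mx1b.
apply: le_trans (_ : (N y - N (M a))%:E + e%:E <= _); first by rewrite -EFinD lee_fin; lra.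
rewrite leeD2r //; apply: le_trans (corresponds_cc_ge MaMb hN hnu (ltW May) yMb) _.
apply: le_measure; rewrite ?inE //.
apply: cc_sub_sublevel (ltW May) yMb _ => x' /x1_min; exact: lt_le_trans yMx1.
Qed.

Let sublevel_approx_unattained x m e : (a <= x)%R -> (x < b)%R -> (M a <= m)%R ->
  (forall x', (x < x' <= b)%R -> (m < M x')%R) ->
  (forall z, (m < z)%R -> exists2 x', (x < x' <= b)%R & (M x' < z)%R) -> (0 < e)%R ->
  exists2 x', (x < x' <= b)%R & (N (M x') - N (M a))%:E <= nu (sublevel x) + e%:E.
Proof.
move=> ax xb Mam m_lt m_inf e0.
have mMb : (m < M b)%R by apply: m_lt; rewrite xb lexx.
have [z /andP[mz zMb] Nz] := corresponds_right_approx MaMb hN hnu Mam mMb e0.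
have [x' /andP[xx' x'b] Mx'z] := m_inf z mz.
exists x'; first by rewrite xx'.
have /andP[Max' _] := M_itv (le_trans ax (ltW xx')) x'b.
apply: le_trans (_ : (N z - N (M a))%:E <= _).
  by rewrite lee_fin lerD2r mN // ltW.
apply: le_trans Nz _; rewrite leeD2r //; apply: le_measure; rewrite ?inE //.
by apply: cc_sub_sublevel Mam (ltW mMb) _ => u /m_lt.
Qed.

Let nu_sublevel_approx x e : (a <= x)%R -> (x < b)%R -> (0 < e)%R ->
  exists2 x', (x < x' <= b)%R & (N (M x') - N (M a))%:E <= nu (sublevel x) + e%:E.
Proof.
move=> ax xb e0; pose E := [set M x' | x' in `]x, b]%classic].
have E_lb : lbound E (M a).
  move=> _ [x' + <-]; rewrite /= in_itv /= => /andP[xx' x'b].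
  by have /andP[] := M_itv (le_trans ax (ltW xx')) x'b.
have E_inf : has_inf E.
  by split; [exists (M b), b; rewrite //= in_itv /= xb lexx | exists (M a)].
set m := inf E.
have m_lb x' : (x < x' <= b)%R -> (m <= M x')%R.
  by move=> hx'; apply: ge_inf; [exists (M a) | exists x'; rewrite //= in_itv].
have Mam : (M a <= m)%R by apply: lb_le_inf (proj1 E_inf) E_lb.
have [[x1 hx1 Mx1]|m_unattained] := pselect (exists2 x1, (x < x1 <= b)%R & M x1 = m).
  by exists x1 => //; apply: sublevel_approx_attained => // x' /m_lb; rewrite Mx1.
apply: sublevel_approx_unattained Mam _ _ e0 => // [x' hx'|z mz].
  by rewrite lt_neqAle m_lb // andbT; apply/eqP => mx'; apply: m_unattained; exists x'.
have zm0 : (0 < z - m)%R by rewrite subr_gt0.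
have [_ [x' hx' <-] Mx'z] := inf_adherent zm0 E_inf.
by exists x'; [move: hx'; rewrite /= in_itv | move: Mx'z; rewrite -/m addrC subrK].
Qed.

Let lam_cc_sublevel x : (a <= x)%R -> (x < b)%R -> lam `[a, x]%classic = nu (sublevel x).
Proof.
move=> ax xb; apply: (@eq_approx_lower_bounds _ _ _
  (fun x' => (N (M x') - N (M a))%:E) (fun x' => (x < x' <= b)%R)).
- by move=> x' /andP[xx' x'b]; exact: (corresponds_cc_le hNM hlam).
- by move=> x'; exact: nu_sublevel_le.
- move=> e e0; have [z xz hz] := corresponds_right_approx ab' hNM hlam ax xb e0.
  by exists z.
- by move=> e e0; exact: nu_sublevel_approx.
Qed.

Local Notation lam' := (pushforward nu Xi_m).

Let lam_ray x : lam `]-oo, x]%classic = lam' `]-oo, x]%classic.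
Proof.
have mr : measurable `]-oo, x]%classic := measurable_itv _.
rewrite /pushforward (measure_setI_conull (measurable_itv `[a, b]) mr hlam.1).
rewrite (measure_setI_conull (measurable_itv `[M a, M b]) (measurable_Xi_preimage mr) hnu.1).
rewrite -/(sublevel x).
have [xa|ax] := ltP x a.
  have -> : `]-oo, x]%classic `&` `[a, b]%classic = set0.
    apply/seteqP; split => u //=; rewrite !in_itv /= => -[ux /andP[au _]].
    by move: (le_lt_trans (le_trans au ux) xa); rewrite ltxx.
  have -> : sublevel x = set0.
    apply/seteqP; split => u //=; rewrite /sublevel /= !in_itv /= => -[ux _].
    have /andP[+ _] := Xi_ext_itv M ab' u.
    by move=> /le_trans/(_ ux)/le_lt_trans/(_ xa); rewrite ltxx.
  by rewrite !measure0.
have [xb|bx] := ltP x b.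
  rewrite -lam_cc_sublevel //; congr (lam _); apply/seteqP; split => u /=; rewrite !in_itv /=.
    by move=> [ux /andP[au _]]; rewrite au ux.
  by move=> /andP[au ux]; rewrite ux au (le_trans ux (ltW xb)).
have -> : `]-oo, x]%classic `&` `[a, b]%classic = `[a, b]%classic.
  by apply/setIidr => u /=; rewrite !in_itv /= => /andP[_ ub]; exact: le_trans bx.
have -> : sublevel x = `[M a, M b]%classic.
  apply/setIidr => u _ /=; rewrite in_itv /=.
  by have /andP[_ h] := Xi_ext_itv M ab' u; exact: le_trans bx.
by rewrite (corresponds_itv ab' hlam) (corresponds_itv MaMb hnu).
Qed.

Let lam_image A : measurable A -> lam A = lam' A.
Proof.
move=> mA; apply: (eq_measure_rays _ lam_ray mA); first exact: measurable_funP.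
by move=> x; apply: (corresponds_lty ab' hlam); exact: measurable_itv.
Qed.

Let Xi_preimage_itv : Xi_m @^-1` `[a, b]%classic = setT.
Proof. by apply/seteqP; split => y // _; rewrite /= in_itv; exact: Xi_ext_itv. Qed.

Lemma lam_preimage E : measurable E ->
  lam E = nu (`[M a, M b]%classic `&` Xi M a b @^-1` E).
Proof.
move=> mE; rewrite lam_image // /pushforward setIC.
rewrite (measure_setI_conull (measurable_itv `[M a, M b]) (measurable_Xi_preimage mE) hnu.1).
congr (nu _); apply/seteqP; split => y [+ yI]; have /andP[May _] := yI.
  by rewrite /= Xi_extE.
by rewrite /= -Xi_extE.
Qed.

Lemma integral_Xi (f : R -> R) : measurable_fun `[a, b] f ->
  (exists C : R, forall x, (a <= x <= b)%R -> (`|f x| <= C)%R) ->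
  \int[lam]_(x in `[a, b]) (f x)%:E = \int[nu]_(y in `[M a, M b]) (f (Xi M a b y))%:E.
Proof.
move=> mf [C fC]; have mI := measurable_itv `[a, b].
pose g := f \_ `[a, b]%classic.
have gE x : (a <= x <= b)%R -> g x = f x by move=> h; rewrite /g patchT // inE /= in_itv.
have mg : measurable_fun setT g.
  by apply: (measurable_restrict f mI measurableT).1; rewrite setTI.
have g_int : nu.-integrable setT ((EFin \o g) \o Xi_m).
  apply: measurable_bounded_integrable => //; first exact: (corresponds_lty MaMb hnu).
    exact: measurableT_comp.
  exists C; split; first exact: num_real.
  move=> K CK y _ /=; rewrite gE ?Xi_ext_itv //.
  by apply: le_trans (ltW CK); apply: fC; exact: Xi_ext_itv.
rewrite (eq_measure_integral lam'); last by move=> A mA _; exact: lam_image.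
transitivity (\int[lam']_(x in `[a, b]) (g x)%:E).
  by apply: eq_integral => x; rewrite inE /= in_itv /= => /gE ->.
rewrite integral_pushforward //; first last.
- by rewrite Xi_preimage_itv.
- exact/measurable_EFinP.
have mC := measurableC (measurable_itv `[M a, M b]).
rewrite Xi_preimage_itv (negligible_integral mC measurableT g_int hnu.1).
rewrite setTD setCK; apply: eq_integral => y; rewrite inE /= in_itv /= => /andP[May yMb].
by rewrite gE ?Xi_extE // Xi_itv.
Qed.

End main.

Theorem mainTheorem2 (R : realType) (a b : R) (M N : R -> R)
  (lam nu : {measure set R -> \bar R}) :
  a < b ->
  {in `[a, b] &, {homo M : x y / x <= y}} ->
  {in `[M a, M b] &, {homo N : x y / x <= y}} ->
  corresponds_to (N \o M) a b lam ->
  corresponds_to N (M a) (M b) nu ->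
  (forall y, Hset M a b y -> y = M a \/ N x @[x --> y^'-] --> N y) ->
  (forall E : set R, measurable E -> E `<=` `[a, b] ->
     lam E = nu (`[M a, M b] `&` Xi M a b @^-1` E)) /\
  (forall f : R -> R, measurable_fun `[a, b] f ->
     (exists C : R, forall x, a <= x <= b -> `|f x| <= C) ->
     (\int[lam]_(x in `[a, b]) (f x)%:E =
      \int[nu]_(y in `[M a, M b]) (f (Xi M a b y))%:E)%E).
Proof.
move=> ab hM hN hlam hnu hH; split.
  by move=> E mE _; exact: (lam_preimage ab hM hN hlam hnu hH mE).
by move=> f mf f_bounded; exact: (integral_Xi ab hM hN hlam hnu hH mf f_bounded).
Qed.
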